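(* Let $I=\mathcal{M}^0[K,G,K;P]$ be a finite Rees $0$-matrix semigroup with $|K|=2$, where $P$ is the $2\times2$ matrix with $p_{\kappa,\kappa}=e$ and $p_{\lambda,\kappa}=0$ for $\lambda\ne\kappa$. If $|G|=1$, then $\sigma_i(I)=\infty$. If $|G|>1$, then $\sigma_i(I)=n+1$, where $n$ is the minimum index of a proper subgroup of $G$.
   Context: $G$ is a finite group with identity $e$. $\mathcal{M}^0[K,G,K;P]$ is $(K\times G\times K)\cup\{0\}$ with $(\kappa,g,\lambda)(\mu,h,\nu)=(\kappa,gp_{\lambda,\mu}h,\nu)$ if $p_{\lambda,\mu}\ne0$, $=0$ otherwise, and $0$ a zero element; it is an inverse semigroup. An inverse subsemigroup is a subsemigroup closed under taking the unique inverse $a^{-1}$ (with $aa^{-1}a=a$, $a^{-1}aa^{-1}=a^{-1}$). $\sigma_i(I)$ is the least positive integer $n$ such that $I$ is the union of $n$ proper inverse subsemigroups, or $\infty$ if none exists. *)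

From HB Require Import structures.
From mathcomp Require Import all_boot all_order all_fingroup.
Set Implicit Arguments. Unset Strict Implicit. Unset Printing Implicit Defensive.

Section Rees.
Variables (K : finType) (gT : finGroupType).

(* Elements of M^0[K,G,K;P]: None is the zero 0, Some (k,g,l) is (k,g,l). *)
Definition rees := option (K * gT * K).

Definition sandwich (l m : K) : option gT := if l == m then Some 1%g else None.

Definition rmul (a b : rees) : rees :=
  match a, b with
  | Some (k, g, l), Some (m, h, n) =>
      match sandwich l m with
      | Some p => Some (k, (g * p * h)%g, n)
      | None => None
      end
  | _, _ => None
  end.

Definition is_inverse (a b : rees) : Prop :=
  rmul (rmul a b) a = a /\ rmul (rmul b a) b = b.

Definition is_subsemigroup (S : {set rees}) : Prop :=
  S != set0 /\ forall a b, a \in S -> b \in S -> rmul a b \in S.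

Definition inverse_closed (S : {set rees}) : Prop :=
  forall a b, a \in S -> is_inverse a b -> b \in S.

Definition proper_inverse_subsemigroup (S : {set rees}) : Prop :=
  [/\ is_subsemigroup S, inverse_closed S & S != setT].

Definition inverse_cover (F : seq {set rees}) : Prop :=
  (forall S, S \in F -> proper_inverse_subsemigroup S) /\
  \bigcup_(S <- F) S = setT.

(* sigma_i(I) = m, with None standing for infinity. *)
Definition sigma_i_is (m : option nat) : Prop :=
  match m with
  | Some n => [/\ 0 < n, exists F, inverse_cover F /\ size F = n
                & forall F, inverse_cover F -> n <= size F]
  | None => forall F, ~ inverse_cover F
  end.

End Rees.

Definition min_proper_index (gT : finGroupType) (G : {group gT}) (n : nat) : Prop :=
  (exists H : {group gT}, H \proper G /\ #|G : H|%g = n) /\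
  (forall H : {group gT}, H \proper G -> n <= #|G : H|%g).

From HB Require Import structures.
From mathcomp Require Import all_boot all_order all_fingroup.
From mathcomp Require Import zify.
Set Implicit Arguments. Unset Strict Implicit. Unset Printing Implicit Defensive.

(* Write K = {k1, k2}. If an inverse subsemigroup S contains some (k1, g, k2), then
   its diagonal block {h | (k1, h, k1) \in S} is a subgroup, proper when S is, and the
   block {h | (k1, h, k2) \in S} lies in one of its cosets. So each member of a cover
   contains at most |G|/n of the elements (k1, _, k2), and at least n members meet
   that block; with exactly n members, their diagonal subgroups, of order at most
   |G|/n and all containing 1, would cover G, which is impossible for n > 1. For
   trivial G the same argument shows that no proper S meets the block at all.
   Conversely, a subgroup H of index n yields the cover by the diagonal part and the
   n preimages of {(k, h, l) | h \in H} U {0} under conjugation by diag(1, x), with x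
   running over representatives of the right cosets of H. *)

Section BigcupSeq.
Variables (I : eqType) (T : finType).
Implicit Types (r : seq I) (A : I -> {set T}).

Lemma bigcup_seqP r A y :
  reflect (exists2 i, i \in r & y \in A i) (y \in \bigcup_(i <- r) A i).
Proof.
elim: r => [|i r IH]; first by rewrite big_nil inE; right; case.
rewrite big_cons inE; apply: (iffP orP) => [[Ay | /IH[j jr Ay]] | [j]].
- by exists i; rewrite ?mem_head.
- by exists j; rewrite // inE jr orbT.
- by rewrite inE => /orP[/eqP-> | jr] Ay; [left | right; apply/IH; exists j].
Qed.

Lemma leq_card_bigcup r A : #|\bigcup_(i <- r) A i| <= \sum_(i <- r) #|A i|.
Proof.
elim/big_ind2: _ => // [|m B n C mB nC]; first by rewrite cards0.
exact: leq_trans (leq_card_setU B C) (leq_add mB nC).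
Qed.

Lemma card_bigcup_common r A x :
  {in r, forall i, x \in A i} ->
  #|\bigcup_(i <- r) A i| <= 1 + \sum_(i <- r) (#|A i| - 1).
Proof.
move=> xA.
have sub : \bigcup_(i <- r) A i \subset x |: \bigcup_(i <- r) (A i :\ x).
  apply/subsetP => y /bigcup_seqP[i ir Ay]; rewrite in_setU1.
  by case: eqVneq => //= yx; apply/bigcup_seqP; exists i; rewrite // !inE yx.
apply: leq_trans (subset_leq_card sub) _.
apply: leq_trans (leq_card_setU _ _) _; rewrite cards1 leq_add2l.
apply: leq_trans (leq_card_bigcup _ _) _.
rewrite big_seq [X in _ <= X]big_seq; apply: leq_sum => i ir.
by rewrite [#|A i|](cardsD1 x) (xA i ir) add1n subn1.
Qed.

End BigcupSeq.

Lemma card2_elements (T : finType) : #|T| = 2 ->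
  exists k1 k2 : T, k1 != k2 /\ forall k, (k == k1) || (k == k2).
Proof.
rewrite -cardsT => /eqP/cards2P[k1 [k2 [k12 T12]]]; exists k1, k2; split=> // k.
by have := in_setT k; rewrite T12 !inE.
Qed.

Section Brandt.
Variables (K : finType) (gT : finGroupType).
Implicit Types (a b : rees K gT) (S : {set rees K gT}) (F : seq {set rees K gT}).
Implicit Types (k l : K) (g h x : gT).

Definition rinv a : rees K gT := if a is Some (k, g, l) then Some (l, g^-1%g, k) else None.

Lemma rmulE k l k' l' g h :
  rmul (Some (k, g, l)) (Some (k', h, l')) =
  if l == k' then Some (k, (g * h)%g, l') else None.
Proof. by rewrite /= /sandwich; case: eqP; rewrite ?mulg1. Qed.

Lemma rmul0r a : rmul a None = None.
Proof. by case: a => [[[]]|]. Qed.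

Lemma rmul_rinv k g l : rmul (Some (k, g, l)) (rinv (Some (k, g, l))) = Some (k, 1%g, k).
Proof. by rewrite rmulE eqxx mulgV. Qed.

Lemma is_inverse_rinv a : is_inverse a (rinv a).
Proof.
case: a => [[[k g] l]|] //.
by rewrite /is_inverse /rinv !rmulE !eqxx mulgV mulVg !rmulE !eqxx !mul1g.
Qed.

Lemma is_inverse_uniq a b : is_inverse a b -> b = rinv a.
Proof.
case: a => [[[k g] l]|]; last by case=> _; rewrite rmul0r.
case: b => [[[k' h] l']|]; last by case; rewrite rmul0r.
case; rewrite rmulE; case: eqP => [<- | _] //; rewrite rmulE.
case: eqP => [-> | _] //; rewrite rmulE eqxx => -[ghg] _.
have /eqP : (g * h = 1)%g by apply: (mulIg g); rewrite mul1g.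
by rewrite -eq_invg_mul => /eqP<-.
Qed.

Lemma inverse_closedE S : inverse_closed S <-> {in S, forall a, rinv a \in S}.
Proof.
split=> [invS a aS | invS a b aS /is_inverse_uniq->]; last exact: invS.
exact: invS aS (is_inverse_rinv a).
Qed.

Definition block S k l : {set gT} := [set g | Some (k, g, l) \in S].

Lemma block_diag1 S k l :
  is_subsemigroup S -> inverse_closed S -> block S k l != set0 -> 1%g \in block S k k.
Proof.
move=> [_ mulS] /inverse_closedE invS /set0Pn[g]; rewrite !inE => gS.
by rewrite -(rmul_rinv k g l) mulS ?invS.
Qed.

Lemma group_set_block S k :
  is_subsemigroup S -> 1%g \in block S k k -> group_set (block S k k).
Proof.
move=> [_ mulS] S1; apply/group_setP; split=> // g h; rewrite !inE => gS hS.
by have := mulS _ _ gS hS; rewrite rmulE eqxx.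
Qed.

Lemma card_block_offdiag S k l :
  is_subsemigroup S -> inverse_closed S -> #|block S k l| <= #|block S k k|.
Proof.
move=> [_ mulS] /inverse_closedE invS.
have [-> | /set0Pn[g0]] := eqVneq (block S k l) set0; first by rewrite cards0.
rewrite inE => g0S; rewrite -(card_rcoset (block S k k) g0); apply/subset_leq_card/subsetP.
move=> g; rewrite inE mem_rcoset inE => gS.
by have := mulS _ _ gS (invS _ g0S); rewrite /rinv rmulE eqxx.
Qed.

Definition diag_part : {set rees K gT} :=
  [set a | if a is Some (k, _, l) then k == l else true].

Definition group_part (H : {set gT}) : {set rees K gT} :=
  [set a | if a is Some (_, h, _) then h \in H else true].

(* Conjugation by the diagonal matrix with entry [1] at [k1] and [x] elsewhere. *)
Definition twist k1 x a : rees K gT :=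
  let c k := if k == k1 then 1%g else x in
  if a is Some (k, g, l) then Some (k, (c k * g * (c l)^-1)%g, l) else None.

Definition coset_part (H : {set gT}) k1 x : {set rees K gT} :=
  twist k1 x @^-1: group_part H.

Lemma twist_rmul k1 x : {morph twist k1 x : a b / rmul a b}.
Proof.
move=> [[[k g] l]|] [[[k' h] l']|] //.
rewrite rmulE /= /sandwich; case: eqP => [<- | _] //=.
by rewrite !mulg1 !mulgA mulgKV.
Qed.

Lemma twist_rinv k1 x : {morph twist k1 x : a / rinv a}.
Proof. by move=> [[[k g] l]|] //=; rewrite !invMg invgK !mulgA. Qed.

Lemma diag_part_proper k1 k2 : k1 != k2 -> proper_inverse_subsemigroup diag_part.
Proof.
move=> k12; split.
- split=> [|[[[k g] l]|] [[[k' h] l']|]]; rewrite ?rmul0r ?inE //.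
    by apply/set0Pn; exists None; rewrite inE.
  by rewrite rmulE => /eqP-> /eqP->; case: eqP => // ->.
- by apply/inverse_closedE => -[[[k g] l]|]; rewrite !inE // eq_sym.
- apply/eqP => /setP/(_ (Some (k1, 1%g, k2))).
  by rewrite !inE (negbTE k12).
Qed.

Lemma coset_part_proper (H : {group gT}) k1 x :
  H \proper [set: gT] -> proper_inverse_subsemigroup (coset_part H k1 x).
Proof.
case/properP=> _ [g _ gNH]; split.
- split=> [|a b]; first by apply/set0Pn; exists None; rewrite !inE.
  rewrite !inE twist_rmul.
  move: (twist k1 x a) (twist k1 x b) => [[[k g1] l]|] [[[k' g2] l']|] //.
  by rewrite rmulE; case: eqP => // _; apply: groupM.
- apply/inverse_closedE => a; rewrite !inE twist_rinv.
  by case: (twist k1 x a) => [[[k h] l]|] //=; rewrite groupV.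
- apply/eqP => /setP/(_ (Some (k1, g, k1))).
  by rewrite !inE /= eqxx invg1 mulg1 mul1g (negbTE gNH).
Qed.

Lemma coset_part_12 (H : {group gT}) k1 k2 x g : k2 != k1 ->
  (Some (k1, g, k2) \in coset_part H k1 x) = (g \in H :* x)%g.
Proof. by move=> k21; rewrite !inE /= eqxx (negbTE k21) mul1g mem_rcoset. Qed.

Lemma coset_part_21 (H : {group gT}) k1 k2 x g : k2 != k1 ->
  (Some (k2, g, k1) \in coset_part H k1 x) = (g^-1 \in H :* x)%g.
Proof.
move=> k21; rewrite !inE /= eqxx (negbTE k21) invg1 mulg1 mem_rcoset.
by rewrite -invMg groupV.
Qed.

Lemma min_proper_index_bounds n :
  min_proper_index [set: gT]%G n -> 1 < n <= #|[set: gT]|.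
Proof.
case=> -[H [HpT <-]] _; rewrite indexg_gt1 (proper_subn HpT) /=.
by rewrite -(Lagrange (subsetT H)) leq_pmull ?cardG_gt0.
Qed.

Lemma inverse_cover_block F k l :
  inverse_cover F -> [set: gT] \subset \bigcup_(S <- F) block S k l.
Proof.
move=> [_ Fcov]; apply/subsetP => h _.
have : Some (k, h, l) \in \bigcup_(S <- F) S by rewrite Fcov inE.
by case/bigcup_seqP => S SF hS; apply/bigcup_seqP; exists S; rewrite ?inE.
Qed.

Section TwoIndices.
Variables (k1 k2 : K).
Hypotheses (k12 : k1 != k2) (K12 : forall k, (k == k1) || (k == k2)).

Lemma inverse_subsemigroup_full S :
  is_subsemigroup S -> inverse_closed S -> block S k1 k2 != set0 ->
  block S k1 k1 = [set: gT] -> S = setT.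
Proof.
move=> [_ mulS] /inverse_closedE invS /set0Pn[g]; rewrite inE => gS /setP B11.
have S11 h : Some (k1, h, k1) \in S by have := B11 h; rewrite !inE.
have S12 h : Some (k1, h, k2) \in S.
  by have := mulS _ _ (S11 (h * g^-1)%g) gS; rewrite rmulE eqxx mulgKV.
have S21 h : Some (k2, h, k1) \in S.
  by have := invS _ (S12 h^-1%g); rewrite /= invgK.
have S22 h : Some (k2, h, k2) \in S.
  by have := mulS _ _ (S21 h) (S12 1%g); rewrite rmulE eqxx mulg1.
apply/setP => -[[[k h] l]|]; rewrite inE.
  by case/orP: (K12 k) => /eqP->; case/orP: (K12 l) => /eqP->;
    [apply: S11 | apply: S12 | apply: S21 | apply: S22].
by have := mulS _ _ gS gS; rewrite rmulE eq_sym (negbTE k12).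
Qed.

Lemma block_diag_proper S : proper_inverse_subsemigroup S ->
  block S k1 k2 != set0 -> block S k1 k1 \proper [set: gT].
Proof.
move=> [semS invS SnT] B12; rewrite properT; apply: contra_neq SnT.
exact: inverse_subsemigroup_full.
Qed.

Lemma no_inverse_cover_of_trivial F : #|[set: gT]| = 1 -> ~ inverse_cover F.
Proof.
move=> G1 [Fp Fcov].
have [S SF S12] : exists2 S, S \in F & Some (k1, 1%g, k2) \in S.
  by apply/bigcup_seqP; rewrite Fcov inE.
have [semS invS _] := Fp S SF.
have B12 : block S k1 k2 != set0 by apply/set0Pn; exists 1%g; rewrite inE.
have /proper_card := block_diag_proper (Fp S SF) B12.
rewrite G1 ltnS leqn0 cards_eq0 => /eqP/setP/(_ 1%g).
by rewrite (block_diag1 semS invS B12) inE.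
Qed.

Lemma inverse_cover_of_subgroup (H : {group gT}) : H \proper [set: gT] ->
  exists2 F : seq {set rees K gT}, inverse_cover F & size F = #|[set: gT] : H|%g.+1.
Proof.
move=> HpT; have k21 : k2 != k1 by rewrite eq_sym.
pose F := diag_part :: [seq coset_part H k1 (repr C) | C <- enum (rcosets H [set: gT])].
exists F; last by rewrite /= size_map -cardE.
split=> [S | ].
  rewrite inE => /predU1P[-> | /mapP[C _ ->]]; first exact: diag_part_proper k12.
  exact: coset_part_proper.
have coset_partF y : coset_part H k1 (repr (H :* y)%g) \in F.
  rewrite inE; apply/orP; right; apply: (map_f (fun C => coset_part H k1 (repr C))).
  by rewrite mem_enum; apply/rcosetsP; exists y; rewrite ?inE.
apply/setP => a; rewrite inE; apply/bigcup_seqP.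
case: a => [[[k g] l]|]; last by exists diag_part; rewrite ?mem_head ?inE.
have [-> | nkl] := eqVneq k l; first by exists diag_part; rewrite ?mem_head ?inE.
case/orP: (K12 k) nkl => /eqP->; case/orP: (K12 l) => /eqP->; rewrite ?eqxx // => _.
  exists (coset_part H k1 (repr (H :* g)%g)); first exact: coset_partF.
  by rewrite coset_part_12 // rcoset_repr rcoset_refl.
exists (coset_part H k1 (repr (H :* g^-1)%g)); first exact: coset_partF.
by rewrite coset_part_21 // rcoset_repr rcoset_refl.
Qed.

Section MinIndex.
Variable n : nat.
Hypothesis minG : min_proper_index [set: gT]%G n.

Lemma block_diag_index_bound S : proper_inverse_subsemigroup S ->
  block S k1 k2 != set0 -> n * #|block S k1 k1| <= #|[set: gT]|.
Proof.
move=> Sp B12; have [semS invS _] := Sp.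
pose H := Group (group_set_block semS (block_diag1 semS invS B12)).
rewrite -(Lagrange (subsetT H)) mulnC leq_mul2l minG.2 ?orbT //.
exact: block_diag_proper.
Qed.

Lemma block_offdiag_index_bound S : proper_inverse_subsemigroup S ->
  n * #|block S k1 k2| <= #|[set: gT]| * (block S k1 k2 != set0).
Proof.
move=> Sp; have [semS invS _] := Sp.
have [-> | B12] := eqVneq (block S k1 k2) set0; first by rewrite cards0 muln0.
rewrite muln1; apply: leq_trans (block_diag_index_bound Sp B12).
by rewrite leq_mul2l card_block_offdiag ?orbT.
Qed.

Lemma inverse_cover_count_offdiag F :
  inverse_cover F -> n <= count (fun S => block S k1 k2 != set0) F.
Proof.
move=> coverF; have [Fp _] := coverF.
rewrite -(leq_pmul2l (cardG_gt0 [set: gT]%G)) mulnC.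
apply: leq_trans (leq_mul (leqnn n) (subset_leq_card (inverse_cover_block k1 k2 coverF))) _.
apply: leq_trans (leq_mul (leqnn n) (leq_card_bigcup _ _)) _.
rewrite big_distrr -sum1_count big_distrr [X in _ <= X]big_mkcond /=.
rewrite big_seq [X in _ <= X]big_seq; apply: leq_sum => S SF.
have := block_offdiag_index_bound (Fp S SF).
by case: eqP => _; rewrite ?muln0 ?muln1.
Qed.

Lemma inverse_cover_size_gt F : inverse_cover F -> n < size F.
Proof.
move=> coverF; have [Fp _] := coverF.
have /andP[n_gt1 n_le_g] := min_proper_index_bounds minG.
set g := #|[set: gT]| in n_le_g *.
rewrite ltnNge; apply/negP => sizeF.
have meetsF : {in F, forall S, block S k1 k2 != set0}.
  apply/allP; rewrite all_count eqn_leq count_size.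
  exact: leq_trans sizeF (inverse_cover_count_offdiag coverF).
have cover11 : g <= 1 + \sum_(S <- F) (#|block S k1 k1| - 1).
  apply: leq_trans (subset_leq_card (inverse_cover_block k1 k1 coverF)) _.
  apply: card_bigcup_common => S SF.
  by have [semS invS _] := Fp S SF; apply: block_diag1 (meetsF S SF).
have : n * g <= n + size F * (g - n).
  apply: leq_trans (leq_mul (leqnn n) cover11) _.
  rewrite mulnDr muln1 leq_add2l big_distrr /=.
  apply: leq_trans (_ : \sum_(S <- F) (g - n) <= _).
    rewrite big_seq [X in _ <= X]big_seq; apply: leq_sum => S SF.
    rewrite mulnBr muln1.
    by apply/leq_sub2r/block_diag_index_bound; [apply: Fp | apply: meetsF].
  by rewrite big_const_seq count_predT iter_addn_0 mulnC.
nia.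
Qed.

End MinIndex.

End TwoIndices.

End Brandt.

Theorem mainTheorem16 (K : finType) (gT : finGroupType) (hK : #|K| = 2) :
  (#|[set: gT]| = 1 -> sigma_i_is K gT None) /\
  (1 < #|[set: gT]| ->
     forall n, min_proper_index [set: gT]%G n -> sigma_i_is K gT (Some n.+1)).
Proof.
have [k1 [k2 [k12 K12]]] := card2_elements hK.
split=> [G1 F | _ n minG]; first exact: (no_inverse_cover_of_trivial k12 K12 G1).
split=> //; last exact: (inverse_cover_size_gt k12 K12 minG).
have [[H [HpT <-]] _] := minG.
by have [F coverF sizeF] := inverse_cover_of_subgroup k12 K12 HpT; exists F.
Qed.
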